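(* Assume the standing hypotheses (H). There is a constant $K_2>0$ such that for every $(t,\mathbf x,y)\in\mathbf D\times\mathbb R$, $\boldsymbol\zeta\in\mathbf Z$ and $\psi>0$, $$|H^\psi_2(t,\mathbf x,y;\boldsymbol\zeta)|\le K_2\|\boldsymbol\zeta-\boldsymbol\zeta^0(\Sigma)\|\Big(\|\boldsymbol\zeta-\boldsymbol\zeta^0(\Sigma)\|+\frac{-U''(y)}{U'(y)}\max\big(1,\|\boldsymbol\zeta-\boldsymbol\zeta^0(\Sigma)\|\big)\psi\Big).$$
   Context: Setting. Fix $T>0$, $S_0>0$, $\Sigma_0>0$, $A_0\in\mathbb R$. $\Omega$: continuous paths $\omega=(\omega^S,\omega^\Sigma,\omega^A):[0,T]\to\mathbb R^3$ with $\omega_0=(S_0,\Sigma_0,A_0)$ (uniform topology, Borel $\sigma$-algebra $\mathcal F$); $S,\Sigma,A$ coordinate processes, $\mathbb F$ their raw filtration, $M_t=\sup_{u\le t}S_u$, $\mathbf X_t=(S_t,A_t,M_t,\Sigma_t)$. $\mathbf G=\mathbb R_+\times\mathbb R\times\mathbb R_+$, $\mathbf D^0=(0,T)\times\mathbf G\times\mathbb R_+$ (points $(t,\mathbf x)$, $\mathbf x=(S,A,M,\Sigma)$); $0<\underline\Sigma<\Sigma_0<\overline\Sigma$, $\mathbf D=(0,T)\times\mathbf G\times[\underline\Sigma,\overline\Sigma]$. $\|\cdot\|$ Euclidean norm, $\mathbf e_4$ fourth unit vector, $x^-=\max(-x,0)$. Call: $\mathcal C(t,S,\Sigma)$ with $\mathcal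 C_t+\frac12\Sigma^2S^2\mathcal C_{SS}=0$, $\mathcal C(T_{\mathsf C},S,\Sigma)=\mathsf C(S)$. $b^{\mathcal C}(t,\mathbf x;\boldsymbol\zeta)=\nu\mathcal C_\Sigma+\frac12S^2\mathcal C_{SS}(\sigma^2-\Sigma^2)+\sigma\eta S\mathcal C_{S\Sigma}+\frac12(\eta^2+\xi)\mathcal C_{\Sigma\Sigma}$ for $\boldsymbol\zeta=(\nu,\sigma,\eta,\xi)$. Models: $\mathfrak P^{00}$ = probability measures $P$ on $(\Omega,\mathcal F)$ with progressively measurable $\boldsymbol\zeta^P=(\nu^P,\sigma^P,\eta^P,\xi^P)$ such that $S$, $\Sigma-\int_0^\cdot\nu^P_tdt$ are continuous local $P$-martingales with $d\langle S\rangle_t=S_t^2(\sigma^P_t)^2dt$, $d\langle\Sigma\rangle_t=((\eta^P_t)^2+\xi^P_t)dt$, $d\langle S,\Sigma\rangle_t=S_t\sigma^P_t\eta^P_tdt$, $S,\Sigma>0$, $\xi^P\ge0$, $b^{\mathcal C}(t,\mathbf X_t;\boldsymbol\zeta^P_t)=0$ $dt\times P$-a.e.; for Borel $\alpha,\beta,\gamma,\delta:[0,T]\times\mathbb R^3\to\mathbb R$, $\mathfrak P^0$ = those $P$ with $dA_t=(\alpha+\frac12(\sigma^P_t)^2\beta)dt+\gamma dS_t+\delta dM_t$. $\boldsymbol\zeta^0(\Sigma)=(0,\Sigma,0,0)^\top$; reference model: $\boldsymbol\zeta^P_t=\boldsymbol\zeta^0(\Sigma_t)$ a.e. Non-traded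 option: $\mathcal V(\cdot,\Sigma)$ solves $\mathcal V_t+(\alpha+\frac12\beta\Sigma^2)\mathcal V_A+\frac12\Sigma^2S^2(\mathcal V_{SS}+2\gamma\mathcal V_{SA}+\gamma^2\mathcal V_{AA})=0$ on $(0,T)\times\mathbf G$, $\delta\mathcal V_A+\mathcal V_M=0$ on $\{S\ge M\}$, $\mathcal V(T,\cdot,\Sigma)=\mathsf V$. $\Delta=\mathcal V_S+\gamma\mathcal V_A$, $\Gamma=\mathcal V_{SS}+2\gamma\mathcal V_{SA}+\gamma^2\mathcal V_{AA}$, $\frac{\partial\Delta}{\partial\Sigma}:=\mathcal V_{S\Sigma}+\gamma\mathcal V_{A\Sigma}$. P&L: $V_t=\mathcal V(t,\mathbf X_t)$, $C_t=\mathcal C(t,S_t,\Sigma_t)$; strategies $\boldsymbol\upsilon=(\theta,\phi)$ real locally bounded progressive; $Y^{\boldsymbol\upsilon,P}_t=Y_0+V_0+\int_0^t\theta dS+\int_0^t\phi dC-V_t$. Preferences: $\Psi=\mathrm{diag}(\psi_\nu,\psi_\sigma,\psi_\eta,\psi_\xi)$, positive entries; a utility $U$, strategy set $\mathfrak Y$, model set $\mathfrak P\subset\mathfrak P^0$. Candidate control: $\mathbf c=(\mathcal C_\Sigma,\Sigma S^2\mathcal C_{SS},\Sigma S\mathcal C_{S\Sigma},\frac12\mathcal C_{\Sigma\Sigma})^\top$, $\mathbf v=(\mathcal V_\Sigma,\Sigma(\beta\mathcal V_A+S^2\Gamma),\Sigma S\frac{\partial\Delta}{\partial\Sigma},\frac12\mathcal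 V_{\Sigma\Sigma})^\top$; $\lambda=\frac{\mathbf c^\top\Psi\mathbf v}{\mathbf c^\top\Psi\mathbf c}$ if $\mathcal V_{\Sigma\Sigma}-\frac{\mathbf c^\top\Psi\mathbf v}{\mathbf c^\top\Psi\mathbf c}\mathcal C_{\Sigma\Sigma}\ge0$, else $\lambda=\frac{\mathbf c^\top\Psi\mathbf v-\frac14\mathcal C_{\Sigma\Sigma}\mathcal V_{\Sigma\Sigma}\psi_\xi}{\mathbf c^\top\Psi\mathbf c-\frac14\mathcal C_{\Sigma\Sigma}^2\psi_\xi}$; $\mu=\frac12(\mathcal V_{\Sigma\Sigma}-\lambda\mathcal C_{\Sigma\Sigma})^-$; $\widetilde{\boldsymbol\zeta}=\Psi(\mathbf v-\lambda\mathbf c+\mu\mathbf e_4)$; $\boldsymbol\zeta^\psi=\boldsymbol\zeta^0(\Sigma)+\widetilde{\boldsymbol\zeta}\mathbf 1_{\{\underline\Sigma<\Sigma<\overline\Sigma\}}\psi$; $\widetilde g=\mathbf v^\top\widetilde{\boldsymbol\zeta}$. Cash-equivalent PDE: for $\Sigma\in[\underline\Sigma,\overline\Sigma]$, $\widetilde w_t+(\alpha+\frac12\beta\Sigma^2)\widetilde w_A+\frac12\Sigma^2S^2(\widetilde w_{SS}+2\gamma\widetilde w_{SA}+\gamma^2\widetilde w_{AA})+\frac12\widetilde g(\cdot,\Sigma)=0$ on $(0,T)\times\mathbf G$, $\delta\widetilde w_A+\widetilde w_M=0$ on $\{S\ge M\}$, $\widetilde w(T,\cdot,\Sigma)=0$.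 $L^p_{\mathfrak P}$: Borel $K$ on $\mathbf D^0$ with $\sup_{P\in\mathfrak P}E^P[\int_0^T|K(t,\mathbf X_t)|^pdt]^{1/p}<\infty$. Candidate asymptotic model family: $(P^\psi)_{\psi\in(0,\psi_0)}\subset\mathfrak P$, $\psi_0\in(0,1)$, with $K_0\in L^4_{\mathfrak P}$ and $\|\boldsymbol\zeta^{P^\psi}_t-\boldsymbol\zeta^\psi(t,\mathbf X_t)\|\le K_0(t,\mathbf X_t)\psi^2$ $dt\times P^\psi$-a.e. Assumption (A): (a) $\exists K_{\mathfrak Y}$: $Y^{\boldsymbol\upsilon,P}>-K_{\mathfrak Y}$ $dt\times P$-a.e. for all $\boldsymbol\upsilon\in\mathfrak Y$, $P\in\mathfrak P$; (b) $\mathfrak P$ contains a candidate asymptotic model family and a reference model, and constants $\underline\nu<0<\overline\nu$, $0<\underline\sigma<\underline\Sigma$, $\overline\Sigma<\overline\sigma$, $\underline\eta<0<\overline\eta$, $\overline\xi>0$ bound $\nu^P,\sigma^P,\eta^P,\xi^P,\Sigma$ in $[\underline\nu,\overline\nu],[\underline\sigma,\overline\sigma],[\underline\eta,\overline\eta],[0,\overline\xi],[\underline\Sigma,\overline\Sigma]$ $dt\times P$-a.e. for all $P\in\mathfrak P$; (c) $T_{\mathsf C}\ge T$, $\mathcal C\in C^{1,2,2}((0,T_{\mathsf C})\times\mathbb R_+^2)\cap C([0,T_{\mathsf C}]\times\overline{\mathbb R}_+^2)$ solves the call PDE classically for $\Sigma\in[\underline\Sigma,\overline\Sigma]$, $\mathcal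 C_\Sigma\ne0$ and $|\mathcal C_{\Sigma\Sigma}|\le K_{\mathcal C}(|\mathcal C_\Sigma|+|S^2\mathcal C_{SS}|+|S\mathcal C_{S\Sigma}|)$ on $(0,T)\times\mathbb R_+\times[\underline\Sigma,\overline\Sigma]$ with $K_{\mathcal C}\in L^2_{\mathfrak P}$; (d) $\mathcal V\in C^{1,2,2,1,2}(\mathbf D^0)\cap C(\overline{\mathbf D^0})$ solves the $\mathcal V$-PDE classically for $\Sigma\in[\underline\Sigma,\overline\Sigma]$, $|\mathcal V_\Sigma|,|\beta\mathcal V_A+S^2\Gamma|,|S\frac{\partial\Delta}{\partial\Sigma}|,|\mathcal V_{\Sigma\Sigma}|\le K_{\mathcal V}$ on $\mathbf D$; (e) $\widetilde w\in C^{1,2,2,1,2}(\mathbf D^0)\cap C(\overline{\mathbf D^0})$ solves the cash-equivalent PDE classically for $\Sigma\in[\underline\Sigma,\overline\Sigma]$, $0\le\widetilde w\le K_{\widetilde w}$ on $\mathbf D$, and $\widetilde w_\Sigma,S(\widetilde w_S+\gamma\widetilde w_A),\beta\widetilde w_A+S^2(\widetilde w_{SS}+2\gamma\widetilde w_{SA}+\gamma^2\widetilde w_{AA}),S(\widetilde w_{S\Sigma}+\gamma\widetilde w_{A\Sigma}),\widetilde w_{\Sigma\Sigma}\in L^4_{\mathfrak P}$; (f) $U\in C^3(\mathbb R)$, $U'>0$, $U''<0$, $-U''/U'$ nonincreasing. Additional notation. $\mathbf Z=[\underline\nu,\overline\nu]\times[\underline\sigma,\overline\sigma]\times[\underline\eta,\overline\eta]\times[0,\overline\xi]$.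 $b^{\mathcal V}(t,\mathbf x;\boldsymbol\zeta)=\nu\mathcal V_\Sigma+\frac12(\beta\mathcal V_A+S^2\Gamma)(\sigma^2-\Sigma^2)+\sigma\eta S\frac{\partial\Delta}{\partial\Sigma}+\frac12(\eta^2+\xi)\mathcal V_{\Sigma\Sigma}$. $H^\psi_2(t,\mathbf x,y;\boldsymbol\zeta)=-\frac12\begin{pmatrix}\sigma-\Sigma\\\eta\end{pmatrix}^\top\begin{pmatrix}\beta\mathcal V_A+S^2\Gamma&S\frac{\partial\Delta}{\partial\Sigma}\\S\frac{\partial\Delta}{\partial\Sigma}&\mathcal V_{\Sigma\Sigma}\end{pmatrix}\begin{pmatrix}\sigma-\Sigma\\\eta\end{pmatrix}+\frac{U''(y)}{U'(y)}b^{\mathcal V}(t,\mathbf x;\boldsymbol\zeta)\widetilde w(t,\mathbf x)\psi$. Delta-vega hedge $\boldsymbol\upsilon^\star_t=(\Delta-\frac{\mathcal V_\Sigma}{\mathcal C_\Sigma}\mathcal C_S,\frac{\mathcal V_\Sigma}{\mathcal C_\Sigma})(t,\mathbf X_t)$. Standing hypotheses (H): Assumption (A) holds, $\boldsymbol\upsilon^\star\in\mathfrak Y$, and $(P^\psi)_{\psi\in(0,\psi_0)}\subset\mathfrak P$ is a candidate asymptotic model family. *)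

From Stdlib Require Import Reals.
From Coquelicot Require Import Coquelicot.
Open Scope R_scope.

(* Functions of (t, S, A, M, Sigma), i.e. of (t, x) with x = (S,A,M,Sigma). *)
Definition fn5 := R -> R -> R -> R -> R -> R.
(* Coefficient functions alpha, beta, gamma, delta of (t, S, A, M). *)
Definition fn4 := R -> R -> R -> R -> R.

Definition pS (f : fn5) : fn5 := fun t S A M Sg => Derive (fun x => f t x A M Sg) S.
Definition pA (f : fn5) : fn5 := fun t S A M Sg => Derive (fun x => f t S x M Sg) A.
Definition pSg (f : fn5) : fn5 := fun t S A M Sg => Derive (fun x => f t S A M x) Sg.

Definition Gam (gam : fn4) (V : fn5) : fn5 := fun t S A M Sg =>
  pS (pS V) t S A M Sg + 2 * gam t S A M * pA (pS V) t S A M Sg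
  + (gam t S A M)^2 * pA (pA V) t S A M Sg.

Definition dDelta_dSg (gam : fn4) (V : fn5) : fn5 := fun t S A M Sg =>
  pSg (pS V) t S A M Sg + gam t S A M * pSg (pA V) t S A M Sg.

Definition VGam (bet gam : fn4) (V : fn5) : fn5 := fun t S A M Sg =>
  bet t S A M * pA V t S A M Sg + S^2 * Gam gam V t S A M Sg.

Definition inD (T Sl Su t S A M Sg : R) : Prop :=
  0 < t < T /\ 0 < S /\ 0 < M /\ Sl <= Sg <= Su.

Definition inZ (nl nu sl su el eu xu nu' sig eta xi : R) : Prop :=
  nl <= nu' <= nu /\ sl <= sig <= su /\ el <= eta <= eu /\ 0 <= xi <= xu.

Definition bV (bet gam : fn4) (V : fn5) (t S A M Sg nu sig eta xi : R) : R :=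
  nu * pSg V t S A M Sg
  + / 2 * VGam bet gam V t S A M Sg * (sig^2 - Sg^2)
  + sig * eta * S * dDelta_dSg gam V t S A M Sg
  + / 2 * (eta^2 + xi) * pSg (pSg V) t S A M Sg.

Definition H2 (bet gam : fn4) (V w : fn5) (U : R -> R) (psi : R)
  (t S A M Sg y nu sig eta xi : R) : R :=
  - / 2 * ( VGam bet gam V t S A M Sg * (sig - Sg)^2
            + 2 * (S * dDelta_dSg gam V t S A M Sg) * (sig - Sg) * eta
            + pSg (pSg V) t S A M Sg * eta^2 )
  + Derive_n U 2 y / Derive U y * bV bet gam V t S A M Sg nu sig eta xi
    * w t S A M Sg * psi.

(* || zeta - zeta^0(Sigma) ||, zeta^0(Sigma) = (0, Sigma, 0, 0) *)
Definition dist0 (Sg nu sig eta xi : R) : R :=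
  sqrt (nu^2 + (sig - Sg)^2 + eta^2 + xi^2).

(** The first part of [H2] is a quadratic form in [(sigma - Sigma, eta)] with
    coefficients bounded by (A)(d), hence [O(|zeta - zeta0|^2)].  The second is
    [U''/U'] times [b^V w psi], where [0 <= w <= K] by (A)(e) and [b^V] is linear
    in the coefficients bounded by (A)(d); writing
    [sigma^2 - Sigma^2 = (sigma - Sigma)(sigma - Sigma + 2 Sigma)] shows that
    [b^V = O(|zeta - zeta0| max(1, |zeta - zeta0|))] uniformly in
    [Sigma <= overline Sigma]. *)

From Stdlib Require Import Reals Lra Psatz.
From Coquelicot Require Import Coquelicot.
Open Scope R_scope.

Lemma Rabs_mult_le (x y Kx Ky : R) :
  Rabs x <= Kx -> Rabs y <= Ky -> Rabs (x * y) <= Kx * Ky.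
Proof.
  intros hx hy. rewrite Rabs_mult.
  apply Rmult_le_compat; auto using Rabs_pos.
Qed.

Lemma Rabs_le_sqrt (a s : R) : a ^ 2 <= s -> Rabs a <= sqrt s.
Proof.
  intros h. rewrite <- sqrt_Rsqr_abs. apply sqrt_le_1_alt.
  unfold Rsqr. lra.
Qed.

Lemma Rabs_le_dist0 (Sg nu sig eta xi : R) :
  Rabs nu <= dist0 Sg nu sig eta xi /\
  Rabs (sig - Sg) <= dist0 Sg nu sig eta xi /\
  Rabs eta <= dist0 Sg nu sig eta xi /\
  Rabs xi <= dist0 Sg nu sig eta xi.
Proof.
  pose proof (pow2_ge_0 nu); pose proof (pow2_ge_0 (sig - Sg)).
  pose proof (pow2_ge_0 eta); pose proof (pow2_ge_0 xi).
  unfold dist0; repeat split; apply Rabs_le_sqrt; lra.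
Qed.

Lemma Rabs_quad_form_le (K d p q r x y : R) :
  Rabs p <= K -> Rabs q <= K -> Rabs r <= K -> Rabs x <= d -> Rabs y <= d ->
  Rabs (p * x ^ 2 + 2 * q * x * y + r * y ^ 2) <= 4 * K * d ^ 2.
Proof.
  intros hp hq hr hx hy.
  assert (hx2 : Rabs (x ^ 2) <= d * d) by (simpl; rewrite Rmult_1_r; now apply Rabs_mult_le).
  assert (hy2 : Rabs (y ^ 2) <= d * d) by (simpl; rewrite Rmult_1_r; now apply Rabs_mult_le).
  assert (hxy : Rabs (x * y) <= d * d) by now apply Rabs_mult_le.
  pose proof (Rabs_mult_le _ _ _ _ hp hx2).
  pose proof (Rabs_mult_le _ _ _ _ hr hy2).
  pose proof (Rabs_mult_le _ _ _ _ hq hxy).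
  pose proof (Rabs_triang (p * x ^ 2 + 2 * q * x * y) (r * y ^ 2)).
  pose proof (Rabs_triang (p * x ^ 2) (2 * q * x * y)).
  replace (2 * q * x * y) with (2 * (q * (x * y))) in * by ring.
  rewrite (Rabs_mult 2), (Rabs_pos_eq 2) in * by lra.
  lra.
Qed.

Lemma Rabs_bV_form_le (K d Sg nu sig eta xi p q r s : R) :
  Rabs p <= K -> Rabs q <= K -> Rabs r <= K -> Rabs s <= K ->
  Rabs nu <= d -> Rabs (sig - Sg) <= d -> Rabs eta <= d -> Rabs xi <= d ->
  Rabs (nu * p + / 2 * q * (sig ^ 2 - Sg ^ 2) + sig * eta * r
        + / 2 * (eta ^ 2 + xi) * s)
  <= K * (7 / 2 + 2 * Rabs Sg) * (d * Rmax 1 d).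
Proof.
  intros hp hq hr hs hnu hsig heta hxi.
  assert (hK : 0 <= K) by (pose proof (Rabs_pos p); lra).
  assert (hd : 0 <= d) by (pose proof (Rabs_pos nu); lra).
  pose proof (Rabs_pos Sg) as hSg.
  assert (hsig' : Rabs sig <= d + Rabs Sg).
  { replace sig with ((sig - Sg) + Sg) at 1 by ring.
    pose proof (Rabs_triang (sig - Sg) Sg); lra. }
  assert (hsq : Rabs (sig ^ 2 - Sg ^ 2) <= d * (d + 2 * Rabs Sg)).
  { replace (sig ^ 2 - Sg ^ 2) with ((sig - Sg) * ((sig - Sg) + 2 * Sg)) by ring.
    apply Rabs_mult_le; auto.
    pose proof (Rabs_triang (sig - Sg) (2 * Sg)).
    rewrite Rabs_mult, (Rabs_pos_eq 2) in * by lra; lra. }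
  assert (heta2 : Rabs (eta ^ 2 + xi) <= d * d + d).
  { pose proof (Rabs_triang (eta ^ 2) xi).
    assert (Rabs (eta ^ 2) <= d * d)
      by (simpl; rewrite Rmult_1_r; now apply Rabs_mult_le).
    lra. }
  pose proof (Rabs_mult_le _ _ _ _ hnu hp) as t1.
  pose proof (Rabs_mult_le _ _ _ _ hq hsq) as t2.
  pose proof (Rabs_mult_le _ _ _ _ (Rabs_mult_le _ _ _ _ hsig' heta) hr) as t3.
  pose proof (Rabs_mult_le _ _ _ _ heta2 hs) as t4.
  assert (hlin : Rabs (nu * p + / 2 * q * (sig ^ 2 - Sg ^ 2) + sig * eta * r
                       + / 2 * (eta ^ 2 + xi) * s)
                 <= K * d * (3 / 2 + 2 * Rabs Sg + 2 * d)).
  { replace (/ 2 * q * (sig ^ 2 - Sg ^ 2)) with (/ 2 * (q * (sig ^ 2 - Sg ^ 2))) by ring.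
    replace (/ 2 * (eta ^ 2 + xi) * s) with (/ 2 * ((eta ^ 2 + xi) * s)) by ring.
    pose proof (Rabs_triang (nu * p) (/ 2 * (q * (sig ^ 2 - Sg ^ 2)))).
    pose proof (Rabs_triang (nu * p + / 2 * (q * (sig ^ 2 - Sg ^ 2))) (sig * eta * r)).
    pose proof (Rabs_triang (nu * p + / 2 * (q * (sig ^ 2 - Sg ^ 2)) + sig * eta * r)
                            (/ 2 * ((eta ^ 2 + xi) * s))).
    rewrite !(Rabs_mult (/ 2)), (Rabs_pos_eq (/ 2)) in * by lra.
    nra. }
  pose proof (Rmax_l 1 d); pose proof (Rmax_r 1 d).
  assert (3 / 2 + 2 * Rabs Sg + 2 * d <= (7 / 2 + 2 * Rabs Sg) * Rmax 1 d) by nra.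
  assert (0 <= K * d) by nra.
  nra.
Qed.

Lemma Rabs_H2_le (bet gam : fn4) (V w : fn5) (U : R -> R) (KV Kw Su K2 psi : R)
    (t S A M Sg y nu sig eta xi : R) :
  0 < Sg <= Su -> 0 < psi -> 0 < Derive U y -> Derive_n U 2 y < 0 ->
  Rabs (pSg V t S A M Sg) <= KV ->
  Rabs (VGam bet gam V t S A M Sg) <= KV ->
  Rabs (S * dDelta_dSg gam V t S A M Sg) <= KV ->
  Rabs (pSg (pSg V) t S A M Sg) <= KV ->
  0 <= w t S A M Sg <= Kw ->
  2 * KV + KV * Kw * (7 / 2 + 2 * Su) <= K2 ->
  Rabs (H2 bet gam V w U psi t S A M Sg y nu sig eta xi)
  <= K2 * dist0 Sg nu sig eta xi
     * (dist0 Sg nu sig eta xi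
        + (- Derive_n U 2 y / Derive U y) * Rmax 1 (dist0 Sg nu sig eta xi) * psi).
Proof.
  intros hSg hpsi hU1 hU2 hVS hVG hDD hVSS hw hK2.
  destruct (Rabs_le_dist0 Sg nu sig eta xi) as (hnu & hsig & heta & hxi).
  set (d := dist0 Sg nu sig eta xi) in *.
  set (m := Rmax 1 d).
  set (r := - Derive_n U 2 y / Derive U y).
  assert (hr : 0 <= r).
  { unfold r, Rdiv. apply Rmult_le_pos; [lra | left; now apply Rinv_0_lt_compat]. }
  assert (hd : 0 <= d) by apply sqrt_pos.
  assert (hm : 0 <= m) by (pose proof (Rmax_l 1 d); unfold m; lra).
  assert (hKV : 0 <= KV) by (pose proof (Rabs_pos (pSg V t S A M Sg)); lra).
  pose proof (Rabs_quad_form_le _ _ _ _ _ _ _ hVG hDD hVSS hsig heta) as hQ.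
  assert (hB : Rabs (bV bet gam V t S A M Sg nu sig eta xi)
               <= KV * (7 / 2 + 2 * Su) * (d * m)).
  { unfold bV.
    replace (sig * eta * S * dDelta_dSg gam V t S A M Sg)
      with (sig * eta * (S * dDelta_dSg gam V t S A M Sg)) by ring.
    eapply Rle_trans; [apply (Rabs_bV_form_le KV d); assumption|].
    rewrite (Rabs_pos_eq Sg) by lra.
    apply Rmult_le_compat_r; [nra | apply Rmult_le_compat_l; lra]. }
  assert (hdrift : Rabs (Derive_n U 2 y / Derive U y * bV bet gam V t S A M Sg nu sig eta xi
                         * w t S A M Sg * psi)
                   <= KV * Kw * (7 / 2 + 2 * Su) * (d * (r * m * psi))).
  { replace (Derive_n U 2 y / Derive U y) with (- r) by (unfold r; field; lra).
    rewrite !Rabs_mult, Rabs_Ropp, (Rabs_pos_eq r), (Rabs_pos_eq (w _ _ _ _ _)),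
      (Rabs_pos_eq psi) by lra.
    replace (r * Rabs (bV bet gam V t S A M Sg nu sig eta xi) * w t S A M Sg * psi)
      with (r * psi * (Rabs (bV bet gam V t S A M Sg nu sig eta xi) * w t S A M Sg))
      by ring.
    replace (KV * Kw * (7 / 2 + 2 * Su) * (d * (r * m * psi)))
      with (r * psi * (KV * (7 / 2 + 2 * Su) * (d * m) * Kw)) by ring.
    apply Rmult_le_compat_l; [nra|].
    apply Rmult_le_compat; auto using Rabs_pos; lra. }
  unfold H2. fold d.
  eapply Rle_trans; [apply Rabs_triang|].
  rewrite Rabs_mult, Rabs_Ropp, (Rabs_pos_eq (/ 2)) by lra.
  assert (0 <= d * (r * m * psi)) by (apply Rmult_le_pos; [|apply Rmult_le_pos]; nra).
  assert (0 <= KV * Kw * (7 / 2 + 2 * Su)) by (apply Rmult_le_pos; nra).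
  nra.
Qed.

Theorem proposition5p9
  (T Sl Su Sg0 nl nh sl su el eu xu : R)
  (bet gam : fn4) (V w : fn5) (U : R -> R) (KV Kw : R)
  (* constants of Assumption (A)(b) *)
  (HT : 0 < T) (HSig : 0 < Sl < Sg0 /\ Sg0 < Su)
  (Hnu : nl < 0 < nh) (Hsig : 0 < sl < Sl /\ Su < su)
  (Heta : el < 0 < eu) (Hxi : 0 < xu)
  (* Assumption (A)(d): bounds on V-derivatives on D *)
  (HV : forall t S A M Sg, inD T Sl Su t S A M Sg ->
     Rabs (pSg V t S A M Sg) <= KV /\
     Rabs (VGam bet gam V t S A M Sg) <= KV /\
     Rabs (S * dDelta_dSg gam V t S A M Sg) <= KV /\
     Rabs (pSg (pSg V) t S A M Sg) <= KV)
  (* Assumption (A)(e): 0 <= w~ <= K on D *)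
  (Hw : forall t S A M Sg, inD T Sl Su t S A M Sg ->
     0 <= w t S A M Sg <= Kw)
  (* Assumption (A)(f) *)
  (HU3 : forall y, ex_derive_n U 3 y /\ continuous (Derive_n U 3) y)
  (HU1 : forall y, 0 < Derive U y)
  (HU2 : forall y, Derive_n U 2 y < 0)
  (HUara : forall y1 y2, y1 <= y2 ->
     - Derive_n U 2 y2 / Derive U y2 <= - Derive_n U 2 y1 / Derive U y1) :
  exists K2 : R, 0 < K2 /\
    forall t S A M Sg y nu' sig eta xi psi,
      inD T Sl Su t S A M Sg ->
      inZ nl nh sl su el eu xu nu' sig eta xi ->
      0 < psi ->
      Rabs (H2 bet gam V w U psi t S A M Sg y nu' sig eta xi)
      <= K2 * dist0 Sg nu' sig eta xi
         * (dist0 Sg nu' sig eta xi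
            + (- Derive_n U 2 y / Derive U y)
              * Rmax 1 (dist0 Sg nu' sig eta xi) * psi).
Proof.
  assert (HD0 : inD T Sl Su (T / 2) 1 0 1 Sg0) by (unfold inD; lra).
  assert (hKV : 0 <= KV).
  { destruct (HV _ _ _ _ _ HD0) as [h _].
    pose proof (Rabs_pos (pSg V (T / 2) 1 0 1 Sg0)); lra. }
  assert (hKw : 0 <= Kw) by (pose proof (Hw _ _ _ _ _ HD0); lra).
  exists (2 * KV + KV * Kw * (7 / 2 + 2 * Su) + 1). split.
  - assert (0 <= KV * Kw * (7 / 2 + 2 * Su)) by (apply Rmult_le_pos; nra). lra.
  - intros t S A M Sg y nu sig eta xi psi HD _ Hpsi.
    destruct (HV _ _ _ _ _ HD) as (hVS & hVG & hDD & hVSS).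
    apply Rabs_H2_le with KV Kw Su; auto; [unfold inD in HD | ]; lra.
Qed.
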